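(* Let $\mathcal{U}=\begin{pmatrix}\mathcal{A}&\mathcal{M}\\ \mathcal{N}&\mathcal{B}\end{pmatrix}$ be a generalized matrix ring in which $\mathcal{A}$ and $\mathcal{B}$ are 2-torsion free. Let $\phi:\mathcal{U}\to\mathcal{U}$ be an additive mapping satisfying condition $(\mathbb{P})$, i.e. for all $U,V\in\mathcal{U}$ with $UV=VU=0$ one has $\phi(U)\circ V+U\circ\phi(V)=0$. Then there exist a Jordan derivation $\delta:\mathcal{U}\to\mathcal{U}$ and a multiplier $\eta:\mathcal{U}\to\mathcal{U}$ such that $\phi=\delta+\eta$. Moreover, if $\phi(I)=0$, then $\phi$ is a Jordan derivation.
   Context: A generalized matrix ring is built from: unital rings $\mathcal{A},\mathcal{B}$; a unital $(\mathcal{A},\mathcal{B})$-bimodule $\mathcal{M}$ which is faithful on both sides (if $A\in\mathcal{A}$ and $A\mathcal{M}=\{0\}$ then $A=0$; if $B\in\mathcal{B}$ and $\mathcal{M}B=\{0\}$ then $B=0$); a unital $(\mathcal{B},\mathcal{A})$-bimodule $\mathcal{N}$ (not necessarily faithful); and bimodule homomorphisms $\sigma:\mathcal{M}\otimes_{\mathcal{B}}\mathcal{N}\to\mathcal{A}$, $\rho:\mathcal{N}\otimes_{\mathcal{A}}\mathcal{M}\to\mathcal{B}$, written $MN=\sigma(M\otimes N)$, $NM=\rho(N\otimes M)$, satisfying $(MN)M'=M(NM')$ and $(NM)N'=N(MN')$ for all $M,M'\in\mathcal{M}$, $N,N'\in\mathcal{N}$. Then $\mathcal{U}$ is the set of matrices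 $\begin{pmatrix}A&M\\N&B\end{pmatrix}$ ($A\in\mathcal{A},M\in\mathcal{M},N\in\mathcal{N},B\in\mathcal{B}$) with the usual matrix addition and multiplication; it has identity $I$. A ring is 2-torsion free if $2X=0$ implies $X=0$. The Jordan product is $X\circ Y=XY+YX$. For a unital ring $\mathcal{R}$: an additive map $\delta:\mathcal{R}\to\mathcal{R}$ is a Jordan derivation if $\delta(X^2)=\delta(X)X+X\delta(X)$ for all $X$; an additive map $\eta:\mathcal{R}\to\mathcal{R}$ is a multiplier if $\eta(X)=\eta(I)X=X\eta(I)$ for all $X\in\mathcal{R}$. *)

From HB Require Import structures.
From mathcomp Require Import all_boot all_order all_algebra.
Set Implicit Arguments. Unset Strict Implicit. Unset Printing Implicit Defensive.
Import GRing.Theory.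
Local Open Scope ring_scope.

(* Data of a generalized matrix ring (A M; N B):
   A, B unital rings, M an (A,B)-bimodule (faithful on both sides),
   N a (B,A)-bimodule, sigma : M (x)_B N -> A, rho : N (x)_A M -> B
   bimodule homomorphisms (encoded as balanced biadditive maps), with the
   two associativity conditions. *)
Record GMRing (A B : pzRingType) (M N : zmodType) := {
  actAM : A -> M -> M;
  actMB : M -> B -> M;
  actBN : B -> N -> N;
  actNA : N -> A -> N;
  sig   : M -> N -> A;
  rh    : N -> M -> B;
  actAM_addl : forall a a' m, actAM (a + a') m = actAM a m + actAM a' m;
  actAM_addr : forall a m m', actAM a (m + m') = actAM a m + actAM a m';
  actAM_mul  : forall a a' m, actAM (a * a') m = actAM a (actAM a' m);
  actAM_1    : forall m, actAM 1 m = m;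
  actMB_addl : forall m m' b, actMB (m + m') b = actMB m b + actMB m' b;
  actMB_addr : forall m b b', actMB m (b + b') = actMB m b + actMB m b';
  actMB_mul  : forall m b b', actMB m (b * b') = actMB (actMB m b) b';
  actMB_1    : forall m, actMB m 1 = m;
  actM_assoc : forall a m b, actMB (actAM a m) b = actAM a (actMB m b);
  actBN_addl : forall b b' n, actBN (b + b') n = actBN b n + actBN b' n;
  actBN_addr : forall b n n', actBN b (n + n') = actBN b n + actBN b n';
  actBN_mul  : forall b b' n, actBN (b * b') n = actBN b (actBN b' n);
  actBN_1    : forall n, actBN 1 n = n;
  actNA_addl : forall n n' a, actNA (n + n') a = actNA n a + actNA n' a;
  actNA_addr : forall n a a', actNA n (a + a') = actNA n a + actNA n a';
  actNA_mul  : forall n a a', actNA n (a * a') = actNA (actNA n a) a';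
  actNA_1    : forall n, actNA n 1 = n;
  actN_assoc : forall b n a, actNA (actBN b n) a = actBN b (actNA n a);
  faithful_A : forall a, (forall m, actAM a m = 0) -> a = 0;
  faithful_B : forall b, (forall m, actMB m b = 0) -> b = 0;
  sig_addl : forall m m' n, sig (m + m') n = sig m n + sig m' n;
  sig_addr : forall m n n', sig m (n + n') = sig m n + sig m n';
  sig_bal  : forall m b n, sig (actMB m b) n = sig m (actBN b n);
  sig_lin  : forall a m n, sig (actAM a m) n = a * sig m n;
  sig_rin  : forall m n a, sig m (actNA n a) = sig m n * a;
  rh_addl : forall n n' m, rh (n + n') m = rh n m + rh n' m;
  rh_addr : forall n m m', rh n (m + m') = rh n m + rh n m';
  rh_bal  : forall n a m, rh (actNA n a) m = rh n (actAM a m);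
  rh_lin  : forall b n m, rh (actBN b n) m = b * rh n m;
  rh_rin  : forall n m b, rh n (actMB m b) = rh n m * b;
  gm_assocM : forall m n m', actAM (sig m n) m' = actMB m (rh n m');
  gm_assocN : forall n m n', actBN (rh n m) n' = actNA n (sig m n')
}.

Record gmx (A B : pzRingType) (M N : zmodType) := Gmx {
  g11 : A; g12 : M; g21 : N; g22 : B }.

Section GMOps.
Variables (A B : pzRingType) (M N : zmodType) (G : GMRing A B M N).

Definition gadd (X Y : gmx A B M N) : gmx A B M N :=
  Gmx (g11 X + g11 Y) (g12 X + g12 Y) (g21 X + g21 Y) (g22 X + g22 Y).

Definition gzero : gmx A B M N := Gmx 0 0 0 0.

Definition gmul (X Y : gmx A B M N) : gmx A B M N :=
  Gmx (g11 X * g11 Y + sig G (g12 X) (g21 Y))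
      (actAM G (g11 X) (g12 Y) + actMB G (g12 X) (g22 Y))
      (actBN G (g22 X) (g21 Y) + actNA G (g21 X) (g11 Y))
      (rh G (g21 X) (g12 Y) + g22 X * g22 Y).

Definition gone : gmx A B M N := Gmx 1 0 0 1.

Definition gjordan (X Y : gmx A B M N) := gadd (gmul X Y) (gmul Y X).

Definition g_additive (f : gmx A B M N -> gmx A B M N) :=
  forall X Y, f (gadd X Y) = gadd (f X) (f Y).

Definition g_jordan_derivation (d : gmx A B M N -> gmx A B M N) :=
  g_additive d /\ forall X, d (gmul X X) = gadd (gmul (d X) X) (gmul X (d X)).

Definition g_multiplier (e : gmx A B M N -> gmx A B M N) :=
  g_additive e /\ forall X, e X = gmul (e gone) X /\ e X = gmul X (e gone).

Definition g_condP (phi : gmx A B M N -> gmx A B M N) :=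
  forall U V, gmul U V = gzero -> gmul V U = gzero ->
    gadd (gjordan (phi U) V) (gjordan U (phi V)) = gzero.
End GMOps.

Definition two_torsion_free (R : zmodType) := forall x : R, x *+ 2 = 0 -> x = 0.

From HB Require Import structures.
From mathcomp Require Import all_boot all_order all_algebra.
Set Implicit Arguments.
Unset Strict Implicit.
Import GRing.Theory.
Local Open Scope ring_scope.

(* Subtracting the inner derivation [ad T] with [T] built from the
   off-diagonal corners of [phi (E11 1)], one may assume that [phi (E11 1)] is
   diagonal.  Condition (P) applied to the orthogonal pairs (E11 a, E22 b),
   (E12 m, E12 m'), (E11 a + E12 (a m), E22 b - E12 (m b)) and
   ((1, m; n, n m), (- m n, m; n, -1)), together with 2-torsion freeness and
   the faithfulness of M, then shows that phi maps each corner into itself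
   except for maps tM : M -> N and tN : N -> M with m tM(m) = 0 and
   tN(n) n = 0, that phi(I) is central, and, when phi(I) = 0, that the corner
   maps satisfy the Leibniz rules which make phi a Jordan derivation.  In
   general X |-> phi(I) X is a multiplier satisfying (P), so
   X |-> phi(X) - phi(I) X satisfies (P), vanishes at I, and is therefore a
   Jordan derivation. *)


Lemma eq_of_sub_zero (V : zmodType) (s x y : V) : s = 0 -> x - y = s -> x = y.
Proof. by move=> -> /subr0_eq. Qed.

Lemma eq_of_sub_zeroN (V : zmodType) (s x y : V) : s = 0 -> x - y = - s -> x = y.
Proof. by move=> ->; rewrite oppr0 => /subr0_eq. Qed.

Lemma addrCA_eq (V : zmodType) (x r h r' : V) : r = h + r' -> x + r = h + (x + r').
Proof. by move=> ->; rewrite addrCA. Qed.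

Lemma addr0_eq (V : zmodType) (h : V) : h = h + 0.
Proof. by rewrite addr0. Qed.

Lemma cancel_oppr_sum (V : zmodType) (t r r' : V) : r = t + r' -> r' = 0 -> - t + r = 0.
Proof. by move=> -> ->; rewrite addr0 addNr. Qed.

Lemma cancel_addr_sum (V : zmodType) (h r r' : V) : r = - h + r' -> r' = 0 -> h + r = 0.
Proof. by move=> -> ->; rewrite addr0 subrr. Qed.

Ltac bring_to_front :=
  match goal with
  | |- ?y + _ = ?t + _ => unify y t; exact: erefl
  | |- _ + _ = _ + _ => apply: addrCA_eq; bring_to_front
  | |- ?y = ?t + _ => unify y t; apply: addr0_eq
  end.

Ltac cancel_sum :=
  lazymatch goal with
  | |- 0 = 0 => reflexivity
  | |- - ?t + ?r = 0 => apply: (@cancel_oppr_sum _ t r); [bring_to_front | cancel_sum]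
  | |- ?h + ?r = 0 => apply: (@cancel_addr_sum _ h r); [bring_to_front | cancel_sum]
  end.

(* Proves [x = y] when [x - y] is a formal sum whose summands cancel in pairs. *)
Ltac zmod_cancel :=
  apply: subr0_eq; rewrite ?opprD ?opprK ?oppr0 -?addrA ?addr0 ?add0r; cancel_sum.

Ltac zmod_cancel_using H :=
  first [ apply: (eq_of_sub_zero H); zmod_cancel
        | apply: (eq_of_sub_zeroN H); zmod_cancel ].

Section JordanMaps.
Variable R : pzRingType.
Implicit Types (f g : R -> R) (c t x y u v : R).

Definition condP f := forall u v, u * v = 0 -> v * u = 0 ->
  f u * v + v * f u + (u * f v + f v * u) = 0.

Definition jordan_derivation f :=
  {morph f : x y / x + y} /\ forall x, f (x * x) = f x * x + x * f x.

Definition multiplier f :=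
  {morph f : x y / x + y} /\ forall x, f x = f 1 * x /\ f x = x * f 1.

Definition ad t x := t * x - x * t.

Lemma condP_sub f g : condP f -> condP g -> condP (fun x => f x - g x).
Proof.
move=> Pf Pg u v uv0 vu0.
have E : f u * v + v * f u + (u * f v + f v * u)
         - (g u * v + v * g u + (u * g v + g v * u)) = 0.
  by rewrite Pf // Pg // subrr.
by rewrite !mulrBl !mulrBr; zmod_cancel_using E.
Qed.

Lemma condP_ad t : condP (ad t).
Proof.
move=> u v uv0 vu0; rewrite /ad !mulrBl !mulrBr.
rewrite -!mulrA ?uv0 ?vu0 ?mulr0 !mulrA ?uv0 ?vu0 ?mul0r.
zmod_cancel.
Qed.

Lemma condP_mull c : (forall x, c * x = x * c) -> condP ( *%R c).
Proof.
move=> cC u v uv0 vu0.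
by rewrite -!mulrA uv0 vu0 mulr0 !mulrA -!cC -!mulrA uv0 vu0 mulr0 !addr0.
Qed.

Lemma multiplier_mull c : (forall x, c * x = x * c) -> multiplier ( *%R c).
Proof. by move=> cC; split=> [x y|x]; rewrite ?mulrDr // mulr1 cC. Qed.

Lemma jordan_derivation_ad t : jordan_derivation (ad t).
Proof.
split=> [x y|x]; rewrite /ad; first by rewrite mulrDl mulrDr; zmod_cancel.
rewrite !mulrBl !mulrBr !mulrA; zmod_cancel.
Qed.

Lemma jordan_derivationD f g :
  jordan_derivation f -> jordan_derivation g -> jordan_derivation (fun x => f x + g x).
Proof.
move=> [fD fJ] [gD gJ]; split=> [x y|x]; first by rewrite fD gD; zmod_cancel.
by rewrite fJ gJ !mulrDl !mulrDr; zmod_cancel.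
Qed.

Lemma eq_jordan_derivation f g : f =1 g -> jordan_derivation g -> jordan_derivation f.
Proof. by move=> fg [gD gJ]; split=> [x y|x]; rewrite !fg ?gD ?gJ. Qed.

End JordanMaps.

Lemma additive0 (U V : zmodType) (f : U -> V) : {morph f : x y / x + y} -> f 0 = 0.
Proof. by move=> fD; apply: (addrI (f 0)); rewrite -fD !addr0. Qed.

Lemma additiveN (U V : zmodType) (f : U -> V) :
  {morph f : x y / x + y} -> {morph f : x / - x}.
Proof. by move=> fD x; apply: (addrI (f x)); rewrite -fD !subrr (additive0 fD). Qed.

Section GMRingArith.
Variables (A B : pzRingType) (M N : zmodType) (G : GMRing A B M N).

Lemma sig0l n : sig G 0 n = 0.
Proof. exact: (additive0 (fun x => sig_addl G x ^~ n)). Qed.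
Lemma sig0r m : sig G m 0 = 0. Proof. exact: (additive0 (sig_addr G m)). Qed.
Lemma sigNl m n : sig G (- m) n = - sig G m n.
Proof. exact: (additiveN (fun x => sig_addl G x ^~ n)). Qed.
Lemma sigNr m n : sig G m (- n) = - sig G m n.
Proof. exact: (additiveN (sig_addr G m)). Qed.
Lemma rh0l m : rh G 0 m = 0. Proof. exact: (additive0 (fun x => rh_addl G x ^~ m)). Qed.
Lemma rh0r n : rh G n 0 = 0. Proof. exact: (additive0 (rh_addr G n)). Qed.
Lemma rhNl n m : rh G (- n) m = - rh G n m.
Proof. exact: (additiveN (fun x => rh_addl G x ^~ m)). Qed.
Lemma rhNr n m : rh G n (- m) = - rh G n m. Proof. exact: (additiveN (rh_addr G n)). Qed.
Lemma actAM0l m : actAM G 0 m = 0.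
Proof. exact: (additive0 (fun x => actAM_addl G x ^~ m)). Qed.
Lemma actAM0r a : actAM G a 0 = 0. Proof. exact: (additive0 (actAM_addr G a)). Qed.
Lemma actAMNl a m : actAM G (- a) m = - actAM G a m.
Proof. exact: (additiveN (fun x => actAM_addl G x ^~ m)). Qed.
Lemma actAMNr a m : actAM G a (- m) = - actAM G a m.
Proof. exact: (additiveN (actAM_addr G a)). Qed.
Lemma actMB0l b : actMB G 0 b = 0.
Proof. exact: (additive0 (fun x => actMB_addl G x ^~ b)). Qed.
Lemma actMB0r m : actMB G m 0 = 0. Proof. exact: (additive0 (actMB_addr G m)). Qed.
Lemma actMBNl m b : actMB G (- m) b = - actMB G m b.
Proof. exact: (additiveN (fun x => actMB_addl G x ^~ b)). Qed.
Lemma actMBNr m b : actMB G m (- b) = - actMB G m b.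
Proof. exact: (additiveN (actMB_addr G m)). Qed.
Lemma actBN0l n : actBN G 0 n = 0.
Proof. exact: (additive0 (fun x => actBN_addl G x ^~ n)). Qed.
Lemma actBN0r b : actBN G b 0 = 0. Proof. exact: (additive0 (actBN_addr G b)). Qed.
Lemma actBNNl b n : actBN G (- b) n = - actBN G b n.
Proof. exact: (additiveN (fun x => actBN_addl G x ^~ n)). Qed.
Lemma actBNNr b n : actBN G b (- n) = - actBN G b n.
Proof. exact: (additiveN (actBN_addr G b)). Qed.
Lemma actNA0l a : actNA G 0 a = 0.
Proof. exact: (additive0 (fun x => actNA_addl G x ^~ a)). Qed.
Lemma actNA0r n : actNA G n 0 = 0. Proof. exact: (additive0 (actNA_addr G n)). Qed.
Lemma actNANl n a : actNA G (- n) a = - actNA G n a.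
Proof. exact: (additiveN (fun x => actNA_addl G x ^~ a)). Qed.
Lemma actNANr n a : actNA G n (- a) = - actNA G n a.
Proof. exact: (additiveN (actNA_addr G n)). Qed.

Lemma actM_assocV a m b : actAM G a (actMB G m b) = actMB G (actAM G a m) b.
Proof. by rewrite actM_assoc. Qed.
Lemma actN_assocV b n a : actBN G b (actNA G n a) = actNA G (actBN G b n) a.
Proof. by rewrite actN_assoc. Qed.
Lemma gm_assocMV m n m' : actMB G m (rh G n m') = actAM G (sig G m n) m'.
Proof. by rewrite gm_assocM. Qed.
Lemma gm_assocNV n m n' : actNA G n (sig G m n') = actBN G (rh G n m) n'.
Proof. by rewrite gm_assocN. Qed.

End GMRingArith.

Ltac gm_expand := rewrite ?(mulrDl, mulrDr, sig_addl, sig_addr, rh_addl, rh_addr,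
  actAM_addl, actAM_addr, actMB_addl, actMB_addr, actBN_addl, actBN_addr,
  actNA_addl, actNA_addr, mulNr, mulrN, opprK, mulr0, mul0r,
  sig0l, sig0r, sigNl, sigNr, rh0l, rh0r, rhNl, rhNr,
  actAM0l, actAM0r, actAMNl, actAMNr, actMB0l, actMB0r, actMBNl, actMBNr,
  actBN0l, actBN0r, actBNNl, actBNNr, actNA0l, actNA0r, actNANl, actNANr,
  oppr0, addr0, add0r, opprD).

(* The associativity axioms can be oriented to absorb every [rh] into [sig]
   and actions ([gm_normA]) or every [sig] into [rh] and actions ([gm_normB]);
   an identity in the corner [A] (resp. [B]) needs the first (resp. second). *)
Ltac gm_normA := do 3 (gm_expand; rewrite ?(actAM_mul, actMB_mul, actBN_mul, actNA_mul,
  actM_assoc, actN_assocV, sig_lin, sig_rin, sig_bal, gm_assocN, gm_assocMV, mulrA,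
  actAM_1, actMB_1, actBN_1, actNA_1, mul1r, mulr1)).
Ltac gm_normB := do 3 (gm_expand; rewrite ?(actAM_mul, actMB_mul, actBN_mul, actNA_mul,
  actM_assocV, actN_assoc, rh_lin, rh_rin, rh_bal, gm_assocM, gm_assocNV, mulrA,
  actAM_1, actMB_1, actBN_1, actNA_1, mul1r, mulr1)).

Section GMRingStructure.
Variables (A B : pzRingType) (M N : zmodType) (G : GMRing A B M N).

Lemma gmx_ext (X Y : gmx A B M N) :
  g11 X = g11 Y -> g12 X = g12 Y -> g21 X = g21 Y -> g22 X = g22 Y -> X = Y.
Proof. by case: X => ????; case: Y => ???? /= -> -> -> ->. Qed.

Definition gmx_tuple (X : gmx A B M N) := (g11 X, g12 X, g21 X, g22 X).
Definition tuple_gmx (p : A * M * N * B) : gmx A B M N :=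
  Gmx p.1.1.1 p.1.1.2 p.1.2 p.2.
Lemma gmx_tupleK : cancel gmx_tuple tuple_gmx. Proof. by case. Qed.
HB.instance Definition _ := Choice.copy (gmx A B M N) (can_type gmx_tupleK).

(* The multiplication depends on [G], so the ring is carried by an alias of
   [gmx A B M N] indexed by [G]. *)
Definition gmx_ring (_ : GMRing A B M N) := gmx A B M N.
HB.instance Definition _ := Choice.on (gmx_ring G).

Definition gopp (X : gmx A B M N) : gmx A B M N :=
  Gmx (- g11 X) (- g12 X) (- g21 X) (- g22 X).

Lemma gaddA : associative (@gadd A B M N).
Proof. by move=> X Y Z; apply: gmx_ext; rewrite /= addrA. Qed.
Lemma gaddC : commutative (@gadd A B M N).
Proof. by move=> X Y; apply: gmx_ext; rewrite /= addrC. Qed.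
Lemma gadd0 : left_id (gzero A B M N) (@gadd A B M N).
Proof. by move=> X; apply: gmx_ext; rewrite /= add0r. Qed.
Lemma gaddN : left_inverse (gzero A B M N) gopp (@gadd A B M N).
Proof. by move=> X; apply: gmx_ext; rewrite /= addNr. Qed.
HB.instance Definition _ := GRing.isZmodule.Build (gmx_ring G) gaddA gaddC gadd0 gaddN.

Ltac gm_solve := apply: gmx_ext => /=; gm_normA; try zmod_cancel; gm_normB; zmod_cancel.

Lemma gmulA : associative (gmul G). Proof. by move=> X Y Z; gm_solve. Qed.
Lemma gmul1l : left_id (gone A B M N) (gmul G). Proof. by move=> X; gm_solve. Qed.
Lemma gmul1r : right_id (gone A B M N) (gmul G). Proof. by move=> X; gm_solve. Qed.
Lemma gmulDl : left_distributive (gmul G) (@gadd A B M N).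
Proof. by move=> X Y Z; gm_solve. Qed.
Lemma gmulDr : right_distributive (gmul G) (@gadd A B M N).
Proof. by move=> X Y Z; gm_solve. Qed.
HB.instance Definition _ :=
  GRing.Zmodule_isPzRing.Build (gmx_ring G) gmulA gmul1l gmul1r gmulDl gmulDr.

End GMRingStructure.

Section GMRingComponents.
Variables (A B : pzRingType) (M N : zmodType) (G : GMRing A B M N).
Implicit Types X Y : gmx_ring G.
Local Notation "'E11' a" := (Gmx a 0 0 0 : gmx_ring G) (at level 10, a at level 9).
Local Notation "'E12' m" := (Gmx 0 m 0 0 : gmx_ring G) (at level 10, m at level 9).
Local Notation "'E21' n" := (Gmx 0 0 n 0 : gmx_ring G) (at level 10, n at level 9).
Local Notation "'E22' b" := (Gmx 0 0 0 b : gmx_ring G) (at level 10, b at level 9).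

Lemma g11M X Y : g11 (X * Y) = g11 X * g11 Y + sig G (g12 X) (g21 Y). Proof. by []. Qed.
Lemma g12M X Y : g12 (X * Y) = actAM G (g11 X) (g12 Y) + actMB G (g12 X) (g22 Y).
Proof. by []. Qed.
Lemma g21M X Y : g21 (X * Y) = actBN G (g22 X) (g21 Y) + actNA G (g21 X) (g11 Y).
Proof. by []. Qed.
Lemma g22M X Y : g22 (X * Y) = rh G (g21 X) (g12 Y) + g22 X * g22 Y. Proof. by []. Qed.
Lemma g11D X Y : g11 (X + Y) = g11 X + g11 Y. Proof. by []. Qed.
Lemma g12D X Y : g12 (X + Y) = g12 X + g12 Y. Proof. by []. Qed.
Lemma g21D X Y : g21 (X + Y) = g21 X + g21 Y. Proof. by []. Qed.
Lemma g22D X Y : g22 (X + Y) = g22 X + g22 Y. Proof. by []. Qed.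
Lemma g11N X : g11 (- X) = - g11 X. Proof. by []. Qed.
Lemma g12N X : g12 (- X) = - g12 X. Proof. by []. Qed.
Lemma g21N X : g21 (- X) = - g21 X. Proof. by []. Qed.
Lemma g22N X : g22 (- X) = - g22 X. Proof. by []. Qed.
Lemma g110 : g11 (0 : gmx_ring G) = 0. Proof. by []. Qed.
Lemma g120 : g12 (0 : gmx_ring G) = 0. Proof. by []. Qed.
Lemma g210 : g21 (0 : gmx_ring G) = 0. Proof. by []. Qed.
Lemma g220 : g22 (0 : gmx_ring G) = 0. Proof. by []. Qed.
Lemma g111 : g11 (1 : gmx_ring G) = 1. Proof. by []. Qed.
Lemma g121 : g12 (1 : gmx_ring G) = 0. Proof. by []. Qed.
Lemma g211 : g21 (1 : gmx_ring G) = 0. Proof. by []. Qed.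
Lemma g221 : g22 (1 : gmx_ring G) = 1. Proof. by []. Qed.

Lemma gmx_blocks a m n b : (Gmx a m n b : gmx_ring G) = E11 a + E12 m + E21 n + E22 b.
Proof. by apply: gmx_ext; rewrite /= ?addr0 ?add0r. Qed.

Lemma gmx11D a a' : E11 (a + a') = E11 a + E11 a'.
Proof. by apply: gmx_ext; rewrite /= ?addr0. Qed.
Lemma gmx12D m m' : E12 (m + m') = E12 m + E12 m'.
Proof. by apply: gmx_ext; rewrite /= ?addr0. Qed.
Lemma gmx21D n n' : E21 (n + n') = E21 n + E21 n'.
Proof. by apply: gmx_ext; rewrite /= ?addr0. Qed.
Lemma gmx22D b b' : E22 (b + b') = E22 b + E22 b'.
Proof. by apply: gmx_ext; rewrite /= ?addr0. Qed.
Lemma gmx11N a : E11 (- a) = - E11 a.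
Proof. by apply: gmx_ext; rewrite /= ?oppr0. Qed.
Lemma gmx12N m : E12 (- m) = - E12 m.
Proof. by apply: gmx_ext; rewrite /= ?oppr0. Qed.
Lemma gmx21N n : E21 (- n) = - E21 n.
Proof. by apply: gmx_ext; rewrite /= ?oppr0. Qed.
Lemma gmx22N b : E22 (- b) = - E22 b.
Proof. by apply: gmx_ext; rewrite /= ?oppr0. Qed.

End GMRingComponents.

Ltac gm_components := rewrite ?(g11M, g12M, g21M, g22M, g11D, g12D, g21D, g22D,
  g11N, g12N, g21N, g22N, g110, g120, g210, g220, g111, g121, g211, g221) /=.

Section NormalizedCondP.
Variables (A B : pzRingType) (M N : zmodType) (G : GMRing A B M N).
Hypotheses (A2 : two_torsion_free A) (B2 : two_torsion_free B).
Local Notation U := (gmx_ring G).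
Local Notation "'E11' a" := (Gmx a 0 0 0 : U) (at level 10, a at level 9).
Local Notation "'E12' m" := (Gmx 0 m 0 0 : U) (at level 10, m at level 9).
Local Notation "'E21' n" := (Gmx 0 0 n 0 : U) (at level 10, n at level 9).
Local Notation "'E22' b" := (Gmx 0 0 0 b : U) (at level 10, b at level 9).

Variable phi : U -> U.
Hypotheses (phiD : {morph phi : X Y / X + Y}) (phiP : condP phi).
Hypotheses (phiE11_12 : g12 (phi (E11 1)) = 0) (phiE11_21 : g21 (phi (E11 1)) = 0).

Local Notation dA a := (g11 (phi (E11 a))).
Local Notation dB b := (g22 (phi (E22 b))).
Local Notation dM m := (g12 (phi (E12 m))).
Local Notation dN n := (g21 (phi (E21 n))).
Local Notation tM m := (g21 (phi (E12 m))).
Local Notation tN n := (g12 (phi (E21 n))).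

Let halfA (x : A) : x + x = 0 -> x = 0.
Proof. by move=> xx0; apply: A2; rewrite mulr2n. Qed.
Let halfB (x : B) : x + x = 0 -> x = 0.
Proof. by move=> xx0; apply: B2; rewrite mulr2n. Qed.

Let phi0 : phi 0 = 0. Proof. exact: additive0. Qed.
Let phiN : {morph phi : X / - X}. Proof. exact: additiveN. Qed.

Lemma phiP_components (X Y : U) : X * Y = 0 -> Y * X = 0 ->
  let Z := phi X * Y + Y * phi X + (X * phi Y + phi Y * X) in
  [/\ g11 Z = 0, g12 Z = 0, g21 Z = 0 & g22 Z = 0].
Proof. by move=> XY0 YX0 Z; rewrite /Z (phiP XY0 YX0). Qed.

Lemma phi_gmx a m n b :
  phi (Gmx a m n b) = phi (E11 a) + phi (E12 m) + phi (E21 n) + phi (E22 b).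
Proof. by rewrite gmx_blocks !phiD. Qed.

Ltac phi_expand := rewrite ?(gmx11D, gmx12D, gmx21D, gmx22D, gmx11N, gmx12N,
  gmx21N, gmx22N, phiD, phiN, phi0).

Ltac gm_zero := apply: gmx_ext; gm_components;
  first [ done | gm_normA; first [done | zmod_cancel] | gm_normB; first [done | zmod_cancel] ].

Ltac condP_at X Y :=
  let XY0 := fresh "XY0" in let YX0 := fresh "YX0" in
  (have XY0 : X * Y = 0 by gm_zero);
  (have YX0 : Y * X = 0 by gm_zero);
  have := phiP_components XY0 YX0; clear XY0 YX0.

Lemma condP_E11_E22 a b :
  [/\ a * g11 (phi (E22 b)) + g11 (phi (E22 b)) * a = 0,
      g22 (phi (E11 a)) * b + b * g22 (phi (E11 a)) = 0,
      actMB G (g12 (phi (E11 a))) b + actAM G a (g12 (phi (E22 b))) = 0 &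
      actBN G b (g21 (phi (E11 a))) + actNA G (g21 (phi (E22 b))) a = 0].
Proof. by condP_at (E11 a) (E22 b); case; phi_expand; gm_components; gm_normA => *; split. Qed.

Lemma g11_phiE22 b : g11 (phi (E22 b)) = 0.
Proof. by have [+ _ _ _] := condP_E11_E22 1 b; rewrite mul1r mulr1 => /halfA. Qed.
Lemma g22_phiE11 a : g22 (phi (E11 a)) = 0.
Proof. by have [_ + _ _] := condP_E11_E22 a 1; rewrite mul1r mulr1 => /halfB. Qed.
Lemma g12_phiE22 b : g12 (phi (E22 b)) = 0.
Proof. by have [_ _ + _] := condP_E11_E22 1 b; rewrite phiE11_12 actMB0l add0r actAM_1. Qed.
Lemma g12_phiE11 a : g12 (phi (E11 a)) = 0.
Proof. by have [_ _ + _] := condP_E11_E22 a 1; rewrite g12_phiE22 actAM0r addr0 actMB_1. Qed.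
Lemma g21_phiE22 b : g21 (phi (E22 b)) = 0.
Proof. by have [_ _ _ +] := condP_E11_E22 1 b; rewrite phiE11_21 actBN0r add0r actNA_1. Qed.
Lemma g21_phiE11 a : g21 (phi (E11 a)) = 0.
Proof. by have [_ _ _ +] := condP_E11_E22 a 1; rewrite g21_phiE22 actNA0l addr0 actBN_1. Qed.

Ltac phi_diag := rewrite ?(g11_phiE22, g22_phiE11, g12_phiE22, g12_phiE11,
  g21_phiE22, g21_phiE11).

Lemma condP_E12_E12 m m' :
  sig G m' (tM m) + sig G m (tM m') = 0 /\ rh G (tM m) m' + rh G (tM m') m = 0.
Proof.
by condP_at (E12 m) (E12 m'); case;
  phi_expand; gm_components; phi_diag; gm_normA => -> _ _ ->.
Qed.
Lemma condP_E21_E21 n n' :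
  sig G (tN n) n' + sig G (tN n') n = 0 /\ rh G n' (tN n) + rh G n (tN n') = 0.
Proof.
by condP_at (E21 n) (E21 n'); case;
  phi_expand; gm_components; phi_diag; gm_normA => -> _ _ ->.
Qed.

Lemma sig_tM m : sig G m (tM m) = 0.
Proof. by apply: halfA; case: (condP_E12_E12 m m). Qed.
Lemma rh_tM m : rh G (tM m) m = 0. Proof. by apply: halfB; case: (condP_E12_E12 m m). Qed.
Lemma sig_tN n : sig G (tN n) n = 0.
Proof. by apply: halfA; case: (condP_E21_E21 n n). Qed.
Lemma rh_tN n : rh G n (tN n) = 0. Proof. by apply: halfB; case: (condP_E21_E21 n n). Qed.

Lemma g11_phiE12 m : g11 (phi (E12 m)) = 0.
Proof.
condP_at (E11 1 + E12 m) (E22 1 - E12 m); case=> + _ _ _.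
by phi_expand; gm_components; phi_diag; gm_normA; rewrite sig_tM => E; apply: halfA;
  zmod_cancel_using E.
Qed.
Lemma g22_phiE12 m : g22 (phi (E12 m)) = 0.
Proof.
condP_at (E11 1 + E12 m) (E22 1 - E12 m); case=> _ _ _ +.
by phi_expand; gm_components; phi_diag; gm_normA; rewrite rh_tM => E; apply: halfB;
  zmod_cancel_using E.
Qed.
Lemma g11_phiE21 n : g11 (phi (E21 n)) = 0.
Proof.
condP_at (E11 1 + E21 n) (E22 1 - E21 n); case=> + _ _ _.
by phi_expand; gm_components; phi_diag; gm_normA; rewrite sig_tN => E; apply: halfA;
  zmod_cancel_using E.
Qed.
Lemma g22_phiE21 n : g22 (phi (E21 n)) = 0.
Proof.
condP_at (E11 1 + E21 n) (E22 1 - E21 n); case=> _ _ _ +.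
by phi_expand; gm_components; phi_diag; gm_normA; rewrite rh_tN => E; apply: halfB;
  zmod_cancel_using E.
Qed.

Ltac phi_blocks := phi_diag; rewrite ?(g11_phiE12, g22_phiE12, g11_phiE21, g22_phiE21).

Lemma dM_actAM_actMB a m b :
  actMB G (dM (actAM G a m)) b + actAM G a (actMB G m (dB b))
  = actAM G (dA a) (actMB G m b) + actAM G a (dM (actMB G m b)).
Proof.
condP_at (E11 a + E12 (actAM G a m)) (E22 b - E12 (actMB G m b)); case=> _ + _ _.
by phi_expand; gm_components; phi_blocks; gm_normA => E; zmod_cancel_using E.
Qed.
Lemma tM_actAM_actMB a m b : actBN G b (tM (actAM G a m)) = actNA G (tM (actMB G m b)) a.
Proof.
condP_at (E11 a + E12 (actAM G a m)) (E22 b - E12 (actMB G m b)); case=> _ _ + _.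
by phi_expand; gm_components; phi_blocks; gm_normA => E; zmod_cancel_using E.
Qed.
Lemma tN_actNA_actBN a n b : actMB G (tN (actNA G n a)) b = actAM G a (tN (actBN G b n)).
Proof.
condP_at (E11 a + E21 (actNA G n a)) (E22 b - E21 (actBN G b n)); case=> _ + _ _.
by phi_expand; gm_components; phi_blocks; gm_normA => E; zmod_cancel_using E.
Qed.
Lemma dN_actNA_actBN a n b :
  actBN G b (dN (actNA G n a)) + actNA G (actBN G (dB b) n) a
  = actNA G (actBN G b n) (dA a) + actNA G (dN (actBN G b n)) a.
Proof.
condP_at (E11 a + E21 (actNA G n a)) (E22 b - E21 (actBN G b n)); case=> _ _ + _.
by phi_expand; gm_components; phi_blocks; gm_normA => E; zmod_cancel_using E.
Qed.

Lemma actAM_dA1 m : actAM G (dA 1) m = actMB G m (dB 1).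
Proof.
have := dM_actAM_actMB 1 m 1; rewrite !actAM_1 !actMB_1 => E.
by apply: (addIr (dM m)); rewrite -E addrC.
Qed.
Lemma actBN_dB1 n : actBN G (dB 1) n = actNA G n (dA 1).
Proof.
have := dN_actNA_actBN 1 n 1; rewrite !actNA_1 !actBN_1 => E.
by apply: (addrI (dN n)); rewrite E addrC.
Qed.
Lemma dA1_central a : dA 1 * a = a * dA 1.
Proof.
apply/eqP; rewrite -subr_eq0; apply/eqP; apply: (@faithful_A _ _ _ _ G) => m.
by rewrite actAM_addl actAMNl !actAM_mul !actAM_dA1 actM_assoc subrr.
Qed.
Lemma dB1_central b : dB 1 * b = b * dB 1.
Proof.
apply/eqP; rewrite -subr_eq0; apply/eqP; apply: (@faithful_B _ _ _ _ G) => m.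
by rewrite actMB_addr actMBNr !actMB_mul -!actAM_dA1 actM_assoc subrr.
Qed.

Lemma phi1E : phi 1 = Gmx (dA 1) 0 0 (dB 1).
Proof.
have -> : 1 = E11 1 + E22 1 :> U by apply: gmx_ext; rewrite /= ?addr0 ?add0r.
by rewrite phiD; apply: gmx_ext; gm_components; phi_diag; rewrite ?addr0 ?add0r.
Qed.

Lemma phi1_central X : phi 1 * X = X * phi 1.
Proof.
rewrite phi1E; case: X => a m n b; apply: gmx_ext; gm_components; gm_expand.
- exact: dA1_central.
- exact: actAM_dA1.
- exact: actBN_dB1.
- exact: dB1_central.
Qed.

Section Unital.
Hypothesis phi1 : phi 1 = 0.

Lemma dA1 : dA 1 = 0. Proof. by have := congr1 (@g11 _ _ _ _) phi1E; rewrite phi1. Qed.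
Lemma dB1 : dB 1 = 0. Proof. by have := congr1 (@g22 _ _ _ _) phi1E; rewrite phi1. Qed.

Lemma dM_actAM a m : dM (actAM G a m) = actAM G a (dM m) + actAM G (dA a) m.
Proof.
have := dM_actAM_actMB a m 1; rewrite dB1 actMB0r actAM0r !actMB_1 addr0 => ->.
by rewrite addrC.
Qed.
Lemma dM_actMB m b : dM (actMB G m b) = actMB G (dM m) b + actMB G m (dB b).
Proof. by have := dM_actAM_actMB 1 m b; rewrite dA1 actAM0l add0r !actAM_1 => <-. Qed.
Lemma tM_actAM a m : tM (actAM G a m) = actNA G (tM m) a.
Proof. by have := tM_actAM_actMB a m 1; rewrite actBN_1 actMB_1. Qed.
Lemma tM_actMB m b : tM (actMB G m b) = actBN G b (tM m).
Proof. by have := tM_actAM_actMB 1 m b; rewrite actNA_1 actAM_1. Qed.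
Lemma tN_actNA n a : tN (actNA G n a) = actAM G a (tN n).
Proof. by have := tN_actNA_actBN a n 1; rewrite actMB_1 actBN_1. Qed.
Lemma tN_actBN b n : tN (actBN G b n) = actMB G (tN n) b.
Proof. by have := tN_actNA_actBN 1 n b; rewrite actAM_1 actNA_1. Qed.
Lemma dN_actNA n a : dN (actNA G n a) = actNA G (dN n) a + actNA G n (dA a).
Proof.
have := dN_actNA_actBN a n 1; rewrite dB1 actBN0l actNA0l addr0 !actBN_1 => ->.
by rewrite addrC.
Qed.
Lemma dN_actBN b n : dN (actBN G b n) = actBN G b (dN n) + actBN G (dB b) n.
Proof.
have := dN_actNA_actBN 1 n b; rewrite dA1 actNA0r add0r !actNA_1 => <-.
by rewrite addrC.
Qed.

Lemma dA_mul a a' : dA (a * a') = dA a * a' + a * dA a'.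
Proof.
apply: subr0_eq; apply: (@faithful_A _ _ _ _ G) => m.
have dAE x y : actAM G (dA x) y = dM (actAM G x y) - actAM G x (dM y).
  by rewrite dM_actAM addrC addKr.
rewrite !actAM_addl !actAMNl !actAM_addl !actAM_mul !dAE !actAM_mul.
by gm_normA; zmod_cancel.
Qed.
Lemma dB_mul b b' : dB (b * b') = dB b * b' + b * dB b'.
Proof.
apply: subr0_eq; apply: (@faithful_B _ _ _ _ G) => m.
have dBE y x : actMB G y (dB x) = dM (actMB G y x) - actMB G (dM y) x.
  by rewrite dM_actMB addrC addKr.
rewrite !actMB_addr !actMBNr !actMB_addr !actMB_mul !dBE !actMB_mul.
by gm_normA; zmod_cancel.
Qed.

Lemma dA_sig m n : dA (sig G m n) = sig G (dM m) n + sig G m (dN n).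
Proof.
condP_at (Gmx 1 m n (rh G n m) : U) (Gmx (- sig G m n) m n (-1) : U); case=> + _ _ _.
rewrite (phi_gmx 1 m n) (phi_gmx (- sig G m n)); phi_expand; gm_components; phi_blocks.
rewrite ?dA1 ?dB1; gm_normA.
by rewrite ?sig_tM ?sig_tN => E; apply: subr0_eq; apply: halfA; zmod_cancel_using E.
Qed.
Lemma dB_rh m n : dB (rh G n m) = rh G n (dM m) + rh G (dN n) m.
Proof.
condP_at (Gmx 1 m n (rh G n m) : U) (Gmx (- sig G m n) m n (-1) : U); case=> _ _ _ +.
rewrite (phi_gmx 1 m n) (phi_gmx (- sig G m n)); phi_expand; gm_components; phi_blocks.
rewrite ?dA1 ?dB1; gm_normA.
by rewrite ?rh_tM ?rh_tN => E; apply: subr0_eq; apply: halfB; zmod_cancel_using E.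
Qed.

Lemma phi_jordan_derivation : jordan_derivation phi.
Proof.
split=> // -[a m n b].
have -> : (Gmx a m n b : U) * Gmx a m n b = Gmx (a * a + sig G m n) (actAM G a m + actMB G m b)
   (actBN G b n + actNA G n a) (rh G n m + b * b) :> U by [].
rewrite (phi_gmx (a * a + sig G m n)) (phi_gmx a m n b); phi_expand.
apply: gmx_ext; gm_components; phi_blocks; rewrite ?(dA_mul, dB_mul, dA_sig, dB_rh,
  dM_actAM, dM_actMB, tM_actAM, tM_actMB, tN_actNA, tN_actBN, dN_actNA, dN_actBN).
all: first [ gm_normA; rewrite ?sig_tM ?sig_tN ?rh_tM ?rh_tN ?addr0 ?add0r; zmod_cancel
           | gm_normB; rewrite ?sig_tM ?sig_tN ?rh_tM ?rh_tN ?addr0 ?add0r; zmod_cancel ].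
Qed.

End Unital.
End NormalizedCondP.

Section CondP.
Variables (A B : pzRingType) (M N : zmodType) (G : GMRing A B M N).
Hypotheses (A2 : two_torsion_free A) (B2 : two_torsion_free B).
Local Notation U := (gmx_ring G).
Local Notation "'E11' a" := (Gmx a 0 0 0 : U) (at level 10, a at level 9).

Variable phi : U -> U.
Hypotheses (phiD : {morph phi : X Y / X + Y}) (phiP : condP phi).

(* [ad T] takes the values of [phi] on the off-diagonal corners of [E11 1]. *)
Let T : U := Gmx 0 (- g12 (phi (E11 1))) (g21 (phi (E11 1))) 0.
Let psi X := phi X - ad T X.

Let psiD : {morph psi : X Y / X + Y}.
Proof. by move=> X Y; rewrite /psi phiD (jordan_derivation_ad T).1 opprD addrACA. Qed.
Let psiP : condP psi. Proof. exact: condP_sub phiP (condP_ad T). Qed.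
Let psiE11_12 : g12 (psi (E11 1)) = 0.
Proof. by rewrite /psi /ad /T; gm_components; gm_expand; rewrite actAM_1 subrr. Qed.
Let psiE11_21 : g21 (psi (E11 1)) = 0.
Proof. by rewrite /psi /ad /T; gm_components; gm_expand; rewrite actNA_1 subrr. Qed.
Let psi1 : psi 1 = phi 1. Proof. by rewrite /psi /ad mulr1 mul1r subrr subr0. Qed.

Lemma condP_unit_central X : phi 1 * X = X * phi 1.
Proof. by rewrite -psi1; apply: phi1_central. Qed.

Lemma condP_jordan_derivation : phi 1 = 0 -> jordan_derivation phi.
Proof.
move=> phi1; apply: (@eq_jordan_derivation _ _ (fun X => psi X + ad T X)).
  by move=> X; rewrite subrK.
apply: jordan_derivationD (jordan_derivation_ad T).
by apply: phi_jordan_derivation; rewrite ?psi1.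
Qed.

End CondP.

Section Decomposition.
Variables (A B : pzRingType) (M N : zmodType) (G : GMRing A B M N).
Hypotheses (A2 : two_torsion_free A) (B2 : two_torsion_free B).
Local Notation U := (gmx_ring G).
Variable phi : U -> U.
Hypotheses (phiD : {morph phi : X Y / X + Y}) (phiP : condP phi).

Lemma condP_jordan_derivation_add_multiplier :
  exists delta eta : U -> U,
    [/\ jordan_derivation delta, multiplier eta & forall X, phi X = delta X + eta X].
Proof.
have phi1C := condP_unit_central A2 B2 phiD phiP.
exists (fun X => phi X - phi 1 * X), ( *%R (phi 1)); split.
- apply: (condP_jordan_derivation (phi := fun X => phi X - phi 1 * X) A2 B2).
  + by move=> X Y; rewrite phiD mulrDr opprD addrACA.
  + exact: condP_sub phiP (condP_mull phi1C).
  + by rewrite mulr1 subrr.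
- exact: multiplier_mull.
- by move=> X; rewrite subrK.
Qed.

End Decomposition.

Unset Implicit Arguments.

Theorem theorem2p1 (A B : pzRingType) (M N : zmodType) (G : GMRing A B M N)
    (hA : two_torsion_free A) (hB : two_torsion_free B)
    (phi : gmx A B M N -> gmx A B M N)
    (hadd : g_additive phi) (hP : g_condP G phi) :
  (exists delta eta : gmx A B M N -> gmx A B M N,
      g_jordan_derivation G delta /\ g_multiplier G eta /\
      forall X, phi X = gadd (delta X) (eta X)) /\
  (phi (gone A B M N) = gzero A B M N -> g_jordan_derivation G phi).
Proof.
split=> [|phi1]; last exact: (condP_jordan_derivation hA hB hadd hP phi1).
have [delta [eta [deltaJ etaM phiE]]] := condP_jordan_derivation_add_multiplier hA hB hadd hP.
by exists delta, eta.
Qed.
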